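(* Let $G$ be an undirected graph on vertex set $[m]$ with symmetric adjacency matrix $\mathcal{A}\in\{0,1\}^{m\times m}$, each vertex $i$ carrying an attribute vector $a_i\in\mathcal{U}=[k_1]\times\cdots\times[k_C]$. Let $W\in\mathbb{R}^{r\times K}$ with $K=\sum_{j=1}^C k_j$, $W_v\in\mathbb{R}^{r'\times r}$, $W_g\in\mathbb{R}^{r'\times r'}$, let $\sigma(z)=\max\{\alpha z,z\}$ (applied entrywise) for some fixed $\alpha\in[0,1]$, and let $S:\mathbb{R}^r\times\mathbb{R}^r\to\mathbb{R}$ be any function. Set $f_i=W(a_i)$, $F=[f_1,\dots,f_m]\in\mathbb{R}^{r\times m}$, $\mathbf{S}_{ji}=S(f_j,f_i)$, $F_{(1)}=\sigma(W_vF)$, and for $n\ge2$, $F_{(n)}=\big(F_{(n-1)}(\mathcal{A}\odot\mathbf{S})\big)\odot F_{(1)}$; let $f_{(n)}=\sigma(W_gF_{(n)})\mathbf{1}$ with $\mathbf{1}\in\mathbb{R}^m$ the all-ones vector. Then for every $n\ge1$ and every vertex $i\in[m]$, the vector $\tilde F^i_{(n)}:=W_g[F_{(n)}]_i$ (where $[\cdot]_i$ denotes the $i$-th column) satisfies $$\tilde F^i_{(n)}=W_g\,(W_vW)^{\{n\}}\,\Lambda_{(n)}\,c^i_{(n)}(G).$$ Consequently, for every $T\ge1$, $$f_{[T]}=\sum_{i=1}^m\sigma\big(\mathcal{M}\Lambda c^i_{[T]}(G)\big),$$ where $f_{[T]}=[f_{(1)};\dots;f_{(T)}]$, $c^i_{[T]}=[c^i_{(1)};\dots;c^i_{(T)}]$,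 $\mathcal{M}$ is block-diagonal with diagonal blocks $W_g(W_vW)^{\{1\}},\dots,W_g(W_vW)^{\{T\}}$, and $\Lambda$ is block-diagonal with blocks $\Lambda_{(1)},\dots,\Lambda_{(T)}$.
   Context: For an attribute vector $u=(u^1,\dots,u^C)\in\mathcal{U}$, let $h(u)\in\{0,1\}^K$ be the concatenation of the one-hot encodings of $u^1\in[k_1],\dots,u^C\in[k_C]$, and $W(u)=Wh(u)$. Let $K_C=\prod_{j=1}^Ck_j=|\mathcal{U}|$. A walk of length $n$ is a sequence of vertices $(p_1,\dots,p_n)$ with $\mathcal{A}_{p_k,p_{k+1}}=1$ for all $k<n$; it starts at $p_1$; its walk type is $(a_{p_1},\dots,a_{p_n})\in\mathcal{U}^n$. The vertex walk statistics $c^i_{(n)}(G)\in\mathbb{R}^{K_C^n}$ has entries indexed by walk types $v\in\mathcal{U}^n$, the entry at $v$ being the number of walks of length $n$ starting at vertex $i$ with type $v$. The walk weight of $v=(v_1,\dots,v_n)$ is $\lambda(v)=\prod_{k=1}^{n-1}S\big(W(v_{k+1}),W(v_k)\big)$ (equal to $1$ if $n=1$), and $\Lambda_{(n)}$ is the $K_C^n\times K_C^n$ diagonal matrix with entry $\lambda(v)$ at index $v$. For $z\in\mathbb{R}^{r'}$, $\Gamma(z)$ is the diagonal matrix with $[\Gamma(z)]_{ii}=\alpha\,\mathbb{I}[z_i<0]+\mathbb{I}[z_i\ge0]$. $(W_vW)^{\{n\}}$ is the $r'\times K_C^n$ matrix whose column indexed by $v=(v_1,\dots,v_n)$ is $g(v_1)\odot\cdots\odot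 g(v_n)$ with $g(u)=\Gamma(W_vW(u))\,W_vW(u)$. $\odot$ is the entrywise product; index orderings of $c^i_{(n)}$, $\Lambda_{(n)}$ and columns of $(W_vW)^{\{n\}}$ agree. *)

From HB Require Import structures.
From mathcomp Require Import all_boot all_order all_algebra.
Set Implicit Arguments. Unset Strict Implicit. Unset Printing Implicit Defensive.
Import Order.TTheory GRing.Theory Num.Theory.
Local Open Scope ring_scope.

Section GAT.
Variable R : realFieldType.
Variables (m C : nat) (k : 'I_C -> nat) (r r' : nat).
Variable alpha : R.
Variable S : 'cV[R]_r -> 'cV[R]_r -> R.
Variable W : 'M[R]_(r, \sum_(j < C) k j).
Variable Wv : 'M[R]_(r', r).
Variable Wg : 'M[R]_(r', r').
Variable A : 'M[R]_m.

Definition attrU := {dffun forall j : 'I_C, 'I_(k j)}.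
Variable attr : 'I_m -> attrU.

Definition onehot (u : attrU) : 'cV[R]_(\sum_(j < C) k j) :=
  \mxcol_(j < C) (delta_mx (u j) 0 : 'M[R]_(k j, 1)).

Definition Wu (u : attrU) : 'cV[R]_r := W *m onehot u.

Definition lrelu (z : R) : R := Num.max (alpha * z) z.
Definition sigma p q (M : 'M[R]_(p, q)) : 'M[R]_(p, q) := map_mx lrelu M.

Definition hadamard p q (M N : 'M[R]_(p, q)) : 'M[R]_(p, q) :=
  \matrix_(i, j) (M i j * N i j).

Definition fv (i : 'I_m) : 'cV[R]_r := Wu (attr i).
Definition Fmx : 'M[R]_(r, m) := \matrix_(a, i) fv i a 0.
Definition Sbold : 'M[R]_m := \matrix_(j, i) S (fv j) (fv i).
Definition F1 : 'M[R]_(r', m) := sigma (Wv *m Fmx).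

(* F_(n); F_(0) is an unused filler *)
Fixpoint Fn (n : nat) : 'M[R]_(r', m) :=
  match n with
  | 0 => F1
  | 1 => F1
  | n'.+1 => hadamard (Fn n' *m hadamard A Sbold) F1
  end.

Definition ones_m : 'cV[R]_m := const_mx 1.
Definition fn (n : nat) : 'cV[R]_r' := sigma (Wg *m Fn n) *m ones_m.

(* walk types of length n, indexed via the enumeration of U^n *)
Definition WT (n : nat) := (n.-tuple attrU)%type.
Definition NT (n : nat) := #|{: WT n}|.

Definition nwalks (i : 'I_m) (n : nat) (v : WT n) : nat :=
  #|[pred p : n.-tuple 'I_m |
     [&& head i p == i,
         all (fun e => A e.1 e.2 == 1) (zip p (behead p))
       & [seq attr x | x <- p] == val v]]|.

Definition cvec (i : 'I_m) (n : nat) : 'cV[R]_(NT n) :=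
  \col_(b < NT n) (nwalks i (enum_val b))%:R.

Definition lam (n : nat) (v : WT n) : R :=
  \prod_(e <- zip (behead v) v) S (Wu e.1) (Wu e.2).

Definition Lam (n : nat) : 'M[R]_(NT n) :=
  diag_mx (\row_(b < NT n) lam (enum_val b)).

Definition Gamma p (z : 'cV[R]_p) : 'M[R]_p :=
  diag_mx (\row_i (if z i 0 < 0 then alpha else 1)).
Definition gu (u : attrU) : 'cV[R]_r' :=
  Gamma (Wv *m Wu u) *m (Wv *m Wu u).

Definition WvWn (n : nat) : 'M[R]_(r', NT n) :=
  \matrix_(a, b) \prod_(u <- val (enum_val b : WT n)) gu u a 0.

(* stacked objects for T blocks (block t corresponds to n = t+1) *)
Definition fT (T : nat) : 'cV[R]_(\sum_(t < T) r') :=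
  \mxcol_(t < T) fn t.+1.
Definition cT (i : 'I_m) (T : nat) : 'cV[R]_(\sum_(t < T) NT t.+1) :=
  \mxcol_(t < T) cvec i t.+1.
Definition MT (T : nat) : 'M[R]_(\sum_(t < T) r', \sum_(t < T) NT t.+1) :=
  \mxblock_(s < T, t < T)
    (\matrix_(a < r', b < NT t.+1)
       (if s == t then (Wg *m WvWn t.+1) a b else 0)).
Definition LamT (T : nat) : 'M[R]_(\sum_(t < T) NT t.+1) :=
  \mxdiag_(t < T) Lam t.+1.

End GAT.

From HB Require Import structures.
From mathcomp Require Import all_boot all_order all_algebra.
From mathcomp Require Import ring lra.
Set Implicit Arguments. Unset Strict Implicit. Unset Printing Implicit Defensive.
Import Order.TTheory GRing.Theory Num.Theory.
Local Open Scope ring_scope.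

(* Since the leaky ReLU acts as the gate Gamma, F_(1) has columns g(a_i).
   Unfolding F_(n) = (F_(n-1) (A o S)) o F_(1), the entry (a, i) of F_(n) is a
   sum over the walks (i = p_1, ..., p_n) of g(a_{p_1})_a ... g(a_{p_n})_a
   times the edge factors S(f_{p_(k+1)}, f_{p_k}); A being 0/1 and symmetric,
   A_{p_(k+1) p_k} just selects the walks.  Grouping the walks by their type v
   gives c^i_(n)(v) g(v_1)_a ... g(v_n)_a lambda(v).  The stacked identity
   follows blockwise, M and Lambda being block diagonal. *)

Lemma big_tuple_cons (R : nmodType) (T : finType) n (F : n.+1.-tuple T -> R) :
  \sum_(p : n.+1.-tuple T) F p
  = \sum_(x : T) \sum_(t : n.-tuple T) F [tuple of x :: t].
Proof.
rewrite pair_big /=.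
rewrite (reindex (fun q : T * n.-tuple T => [tuple of q.1 :: q.2])) //=.
exists (fun p : n.+1.-tuple T => (thead p, [tuple of behead p])).
  move=> [x t] _ /=; rewrite /thead (tnth_nth x) /=; congr (_, _); exact: val_inj.
by move=> [[|y s] //= hs] _; apply: val_inj.
Qed.

Lemma big_tuple0 (R : nmodType) (T : finType) (F : 0.-tuple T -> R) :
  \sum_(p : 0.-tuple T) F p = F [tuple].
Proof. by rewrite (big_pred1 [tuple]) // => -[[]]. Qed.

Lemma map_mxcol (R R' : Type) (f : R -> R') q (p_ : 'I_q -> nat) n
    (B : forall j, 'M[R]_(p_ j, n)) :
  map_mx f (\mxcol_j B j) = \mxcol_j map_mx f (B j).
Proof.
apply/mxcolP => j; rewrite mxcolK; apply/matrixP => x y.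
by rewrite -[in RHS](mxcolK B j) !mxE.
Qed.

Lemma lrelu_gate (R : realFieldType) (alpha z : R) : 0 <= alpha <= 1 ->
  lrelu alpha z = (if z < 0 then alpha else 1) * z.
Proof.
case/andP => a0 a1; rewrite /lrelu.
by case: ltrP => hz; [apply/max_idPl; nra | rewrite mul1r; apply/max_idPr; nra].
Qed.

Section WalkExpansion.
Variable R : realFieldType.
Variables (m C : nat) (k : 'I_C -> nat) (r r' : nat).
Variable alpha : R.
Variable S : 'cV[R]_r -> 'cV[R]_r -> R.
Variable W : 'M[R]_(r, \sum_(j < C) k j).
Variable Wv : 'M[R]_(r', r).
Variable Wg : 'M[R]_(r', r').
Variable A : 'M[R]_m.
Variable attr : 'I_m -> attrU k.
Hypothesis alpha01 : 0 <= alpha <= 1.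
Hypothesis A01 : forall i j, A i j = 0 \/ A i j = 1.
Hypothesis A_sym : A^T = A.

Notation g := (gu alpha W Wv).
Notation F := (Fn alpha S W Wv A attr).

Definition is_walk (p : seq 'I_m) :=
  all (fun e => A e.1 e.2 == 1) (zip p (behead p)).

(* The a-th entry of the column of (W_v W)^{n} Lambda_(n) at the walk type v. *)
Definition type_value (v : seq (attrU k)) (a : 'I_r') : R :=
  (\prod_(u <- v) g u a 0) * \prod_(e <- zip (behead v) v) S (Wu W e.1) (Wu W e.2).

Definition walk_sum n (i : 'I_m) (a : 'I_r') : R :=
  \sum_(p : n.-tuple 'I_m | (head i p == i) && is_walk p)
    type_value (map attr p) a.

Lemma is_walk_cons x y s : is_walk [:: x, y & s] = (A x y == 1) && is_walk (y :: s).
Proof. by []. Qed.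

Lemma type_value_cons u v s a :
  type_value [:: u, v & s] a
  = g u a 0 * S (Wu W v) (Wu W u) * type_value (v :: s) a.
Proof. by rewrite /type_value /= !big_cons /=; ring. Qed.

Lemma walk_statsE n i a :
  (WvWn alpha W Wv n *m Lam S W n *m cvec A attr i n) a 0 = walk_sum n i a.
Proof.
rewrite mxE; under eq_bigr do rewrite mul_mx_diag !mxE.
pose Y (v : WT k n) := \prod_(u <- val v) g u a 0 * lam S W v.
rewrite -(@big_enum_val _ _ _ _ {: WT k n} (fun v => Y v * (nwalks A attr i v)%:R)) /=.
under eq_bigr do rewrite /nwalks -sum1_card natr_sum mulr_sumr big_mkcond /=.
rewrite exchange_big /walk_sum [RHS]big_mkcond /=; apply: eq_bigr => p _.
rewrite -/(is_walk p); case: ifP => walk_p; last first.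
  by apply: big1 => v _; rewrite inE /= andbA walk_p.
under eq_bigr do rewrite inE /= andbA walk_p mulr1 /=.
rewrite (bigD1 (map_tuple attr p)) //= eqxx big1 ?addr0 // => v.
move=> v_p; case: eqP => // type_p; case/eqP: v_p; exact: val_inj.
Qed.

Lemma walk_sum_head n j a :
  walk_sum n.+1 j a
  = \sum_(s : n.-tuple 'I_m | is_walk (j :: s)) type_value (map attr (j :: s)) a.
Proof.
rewrite /walk_sum big_mkcond big_tuple_cons (bigD1 j) //= [RHS]big_mkcond eqxx.
rewrite [X in _ + X]big1 ?addr0 // => x /negbTE x_j.
by apply: big1 => s _; rewrite x_j.
Qed.

Lemma walk_sum1 i a : walk_sum 1 i a = g (attr i) a 0.
Proof.
by rewrite walk_sum_head big_mkcond big_tuple0 /type_value /= !big_seq1 big_nil mulr1.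
Qed.

Lemma walk_sum_cons n i a :
  walk_sum n.+2 i a
  = g (attr i) a 0 * \sum_j A i j * S (fv W attr j) (fv W attr i) * walk_sum n.+1 j a.
Proof.
rewrite walk_sum_head big_mkcond big_tuple_cons mulr_sumr; apply: eq_bigr => j _.
rewrite walk_sum_head !mulr_sumr [RHS]big_mkcond; apply: eq_bigr => s _ /=.
rewrite is_walk_cons type_value_cons /fv.
have [->|->] := A01 i j; last by rewrite eqxx /=; case: ifP => _; ring.
by rewrite eq_sym oner_eq0 /=; case: ifP => _; ring.
Qed.

Lemma F1E a i : F1 alpha W Wv attr a i = g (attr i) a 0.
Proof.
rewrite /F1 /sigma mxE lrelu_gate // /gu mul_diag_mx !mxE.
by congr (_ * _); [congr (if _ < 0 then _ else _) | ];
   apply: eq_bigr => c _; rewrite !mxE.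
Qed.

Lemma FnE n i a : F n.+1 a i = walk_sum n.+1 i a.
Proof.
elim: n i a => [|n IH] i a; first by rewrite walk_sum1 F1E.
rewrite walk_sum_cons [F n.+2]/Fn -/(F n.+1) mxE F1E mxE mulrC !mulr_sumr.
apply: eq_bigr => j _; rewrite IH !mxE.
have -> : A j i = A i j by rewrite -[in LHS]A_sym mxE.
ring.
Qed.

Lemma col_FnE n i : (1 <= n)%N ->
  col i (F n) = WvWn alpha W Wv n *m Lam S W n *m cvec A attr i n.
Proof.
case: n => // n _; apply/matrixP => a b.
by rewrite (ord1 b) mxE FnE walk_statsE.
Qed.

Lemma fnE n : (1 <= n)%N ->
  fn alpha S W Wv Wg A attr n
  = \sum_(i < m) sigma alpha (Wg *m WvWn alpha W Wv n *m Lam S W n *m cvec A attr i n).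
Proof.
move=> n_gt0.
have colE i : Wg *m WvWn alpha W Wv n *m Lam S W n *m cvec A attr i n = Wg *m col i (F n).
  by rewrite col_FnE // !mulmxA.
under [RHS]eq_bigr do rewrite colE.
apply/matrixP => a b; rewrite (ord1 b) summxE !mxE; apply: eq_bigr => i _.
by rewrite !mxE mulr1; congr lrelu; apply: eq_bigr => j _; rewrite mxE.
Qed.

Lemma stacked_productE T i :
  MT alpha W Wv Wg T *m LamT S W T *m cT A attr i T
  = \mxcol_(t < T) (Wg *m WvWn alpha W Wv t.+1 *m Lam S W t.+1 *m cvec A attr i t.+1).
Proof.
rewrite mul_mxblock_mxdiag mul_mxblock_mxrow; apply: eq_mxcol => s.
rewrite (bigD1 s) //= big1 ?addr0 => [|t t_s].
  by congr (_ *m _ *m _); apply/matrixP => x y; rewrite !mxE eqxx.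
rewrite (_ : \matrix_(_, _) _ = 0) ?mul0mx //.
by apply/matrixP => x y; rewrite !mxE eq_sym (negbTE t_s).
Qed.

End WalkExpansion.

Theorem theorem4 (R : realFieldType) (m C : nat) (k : 'I_C -> nat) (r r' : nat)
  (alpha : R) (S : 'cV[R]_r -> 'cV[R]_r -> R)
  (W : 'M[R]_(r, \sum_(j < C) k j)) (Wv : 'M[R]_(r', r)) (Wg : 'M[R]_(r', r'))
  (A : 'M[R]_m) (attr : 'I_m -> attrU k) :
  0 <= alpha <= 1 ->
  (forall i j, A i j = 0 \/ A i j = 1) ->
  A^T = A ->
  (forall (n : nat) (i : 'I_m), (1 <= n)%N ->
     Wg *m col i (Fn alpha S W Wv A attr n)
     = Wg *m WvWn alpha W Wv n *m Lam S W n *m cvec A attr i n)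
  /\
  (forall T : nat, (1 <= T)%N ->
     fT alpha S W Wv Wg A attr T
     = \sum_(i < m) sigma alpha
         (MT alpha W Wv Wg T *m LamT S W T *m cT A attr i T)).
Proof.
move=> alpha01 A01 A_sym; split=> [n i n_gt0 | T _].
  by rewrite col_FnE // !mulmxA.
rewrite (eq_bigr (fun i => \mxcol_(t < T) sigma alpha
  (Wg *m WvWn alpha W Wv t.+1 *m Lam S W t.+1 *m cvec A attr i t.+1))) => [|i _].
  by rewrite -mxcol_sum; apply: eq_mxcol => t; rewrite fnE.
by rewrite stacked_productE /sigma map_mxcol.
Qed.
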